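(* Let $K$ and $L$ be $n$-element finite sets, $M=K\times L$, and let $u=(u_{kl})$ be a unitary matrix indexed by $K\times L$ all of whose entries are nonzero. Let $G$ be a symmetry group of $u$ with associated representations $S$ on $F(K)$ and $R$ on $F(M)$ (as defined in the context). Then for every $g\in G$ and $f\in F(M)$, $$C_u(R_gf)=S_g\,(C_uf)\,S_g^*\quad\text{and}\quad D_u(R_gf)=S_g\,(D_uf)\,S_g^*.$$
   Context: For a finite set $J$, $F(J)$ denotes the space of complex-valued functions on $J$, with standard Hermitian product $\sum_j\varphi_j\bar\psi_j$. For $f=(f_{kl})\in F(M)$, $C_uf$ and $D_uf$ are the operators on $F(K)$ with matrices $x_{kk'}=\sum_{l\in L}u_{kl}f_{kl}\bar u_{k'l}$ and $y_{kk'}=\sum_{l\in L}u_{kl}f_{k'l}\bar u_{k'l}$ respectively. Let $\mathcal U:F(L)\to F(K)$ be $(\mathcal U\psi)_k=\sum_{l}u_{kl}\psi_l$. A group $G$ is called a symmetry group of $u$ if $G$ acts on the left on the sets $K$ and $L$, and there are faithful unitary representations $S$ on $F(K)$ and $T$ on $F(L)$ of the form $(S_g\varphi)_k=a_k(g)\varphi_{g^{-1}k}$, $(T_g\psi)_l=b_l(g)\psi_{g^{-1}l}$, where $|a_k(g)|=|b_l(g)|=1$, such that $S_g\mathcal U=\mathcal U T_g$ for all $g\in G$. The representation $R$ of $G$ on $F(M)$ is $(R_gf)_{kl}=f_{g^{-1}k\,g^{-1}l}$. *)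

From HB Require Import structures.
From mathcomp Require Import all_boot all_order all_algebra.
Set Implicit Arguments. Unset Strict Implicit. Unset Printing Implicit Defensive.
Import Order.TTheory GRing.Theory Num.Theory.
Local Open Scope ring_scope.

(* Complex scalars: an arbitrary numeric closed field C (e.g. algC, or
   complex R for R : rcfType); conjugation is z^*. *)

(* F(J) = J -> C.  Operators F(J') -> F(J) are represented by their matrices
   (kernels) J -> J' -> C, w.r.t. the standard bases; the standard
   Hermitian product makes the adjoint the conjugate transpose. *)
Definition op (C : Type) (J J' : finType) := J -> J' -> C.

Definition opmul (C : numClosedFieldType) (J J' J'' : finType)
  (A : op C J J') (B : op C J' J'') : op C J J'' :=
  fun j j'' => \sum_(j' : J') A j j' * B j' j''.

Definition opadj (C : numClosedFieldType) (J J' : finType) (A : op C J J') :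
  op C J' J := fun j' j => (A j j')^*.

Definition opid (C : numClosedFieldType) (J : finType) : op C J J :=
  fun j j' => (j == j')%:R.

Definition unitary (C : numClosedFieldType) (K L : finType) (u : op C K L) :=
  opmul u (opadj u) = @opid C K /\ opmul (opadj u) u = @opid C L.

Definition Cu (C : numClosedFieldType) (K L : finType) (u : op C K L)
  (f : K * L -> C) : op C K K :=
  fun k k' => \sum_(l : L) u k l * f (k, l) * (u k' l)^*.

Definition Du (C : numClosedFieldType) (K L : finType) (u : op C K L)
  (f : K * L -> C) : op C K K :=
  fun k k' => \sum_(l : L) u k l * f (k', l) * (u k' l)^*.

Definition left_action (G : groupType) (X : Type) (act : G -> X -> X) :=
  (forall x, act 1%g x = x) /\
  (forall g h x, act (g * h)%g x = act g (act h x)).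

(* monomial operator (P_g phi)_x = c_x(g) phi_{g^-1 x}; its matrix *)
Definition monop (C : numClosedFieldType) (G : groupType) (X : finType)
  (act : G -> X -> X) (c : X -> G -> C) (g : G) : op C X X :=
  fun x x' => c x g * (x' == act (g^-1)%g x)%:R.

Definition faithful_unitary_rep (C : numClosedFieldType) (G : groupType)
  (X : finType) (P : G -> op C X X) :=
  P 1%g = @opid C X /\
  (forall g h, P (g * h)%g = opmul (P g) (P h)) /\
  (forall g, opmul (P g) (opadj (P g)) = @opid C X /\
             opmul (opadj (P g)) (P g) = @opid C X) /\
  injective P.

Definition symmetry_group (C : numClosedFieldType) (K L : finType)
  (u : op C K L) (G : groupType) (actK : G -> K -> K) (actL : G -> L -> L)
  (a : K -> G -> C) (b : L -> G -> C) :=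
  [/\ left_action actK, left_action actL,
      (forall k g, `|a k g| = 1) /\ (forall l g, `|b l g| = 1),
      faithful_unitary_rep (monop actK a) /\
      faithful_unitary_rep (monop actL b) &
      forall g, opmul (monop actK a g) u = opmul u (monop actL b g)].

Definition Rrep (C : Type) (G : groupType) (K L : finType)
  (actK : G -> K -> K) (actL : G -> L -> L) (g : G) (f : K * L -> C) :
  K * L -> C :=
  fun kl => f (actK (g^-1)%g kl.1, actL (g^-1)%g kl.2).

From Stdlib Require Import FunctionalExtensionality.
From HB Require Import structures.
From mathcomp Require Import all_boot all_order all_algebra.
From mathcomp Require Import ring.
Set Implicit Arguments. Unset Strict Implicit. Unset Printing Implicit Defensive.
Import Order.TTheory GRing.Theory Num.Theory.
Local Open Scope ring_scope.

(* Entrywise, S_g u = u T_g reads a_k(g) u_{g^-1 k, l} = u_{k, g l} b_{g l}(g).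
   Hence, as |b| = 1, the rank-one terms u_{kl} conj(u_{k'l}) of C_u and D_u
   transform under l -> g l exactly like the entries of S_g X S_g^*; reindexing
   the sum over l by g gives both identities. *)

Lemma left_action_invK (G : groupType) (X : Type) (act : G -> X -> X) g :
  left_action act -> cancel (act g) (act g^-1%g).
Proof. by move=> [act1 actM] x; rewrite -actM mulVg act1. Qed.

Lemma left_action_K (G : groupType) (X : Type) (act : G -> X -> X) g :
  left_action act -> cancel (act g^-1%g) (act g).
Proof. by move=> [act1 actM] x; rewrite -actM mulgV act1. Qed.

Section MonomialOperators.

Variables (C : numClosedFieldType) (G : groupType) (X : finType).
Variables (act : G -> X -> X) (c : X -> G -> C) (g : G).

Lemma monop_mulE (Y : finType) (A : op C X Y) x y :
  opmul (monop act c g) A x y = c x g * A (act g^-1%g x) y.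
Proof.
rewrite /opmul /monop (bigD1 (act g^-1%g x)) //= eqxx mulr1 big1 ?addr0 //.
by move=> x' /negbTE ->; rewrite mulr0 mul0r.
Qed.

Lemma mul_opadj_monopE (Y : finType) (A : op C Y X) y x :
  opmul A (opadj (monop act c g)) y x = A y (act g^-1%g x) * (c x g)^*.
Proof.
rewrite /opmul /opadj /monop (bigD1 (act g^-1%g x)) //= eqxx.
rewrite rmorphM /= rmorph1 mulr1 big1 ?addr0 //.
by move=> x' /negbTE ->; rewrite mulr0 rmorph0 mulr0.
Qed.

Lemma monop_conjE (A : op C X X) x x' :
  opmul (opmul (monop act c g) A) (opadj (monop act c g)) x x' =
  c x g * A (act g^-1%g x) (act g^-1%g x') * (c x' g)^*.
Proof. by rewrite mul_opadj_monopE monop_mulE. Qed.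

Hypothesis act_left : left_action act.

Lemma mul_monopE (Y : finType) (A : op C Y X) y x :
  opmul A (monop act c g) y x = A y (act g x) * c (act g x) g.
Proof.
rewrite /opmul /monop (bigD1 (act g x)) //= left_action_invK // eqxx mulr1.
rewrite big1 ?addr0 // => x' neq_x'.
case: eqP => [x_eq|_]; last by rewrite !mulr0.
by move: neq_x'; rewrite x_eq left_action_K ?eqxx.
Qed.

End MonomialOperators.

Section Intertwiner.

Variables (C : numClosedFieldType) (K L : finType) (u : op C K L).
Variables (G : groupType) (actK : G -> K -> K) (actL : G -> L -> L).
Variables (a : K -> G -> C) (b : L -> G -> C) (g : G).

Hypothesis actL_left : left_action actL.
Hypothesis b_unimodular : forall l, `|b l g| = 1.
Hypothesis u_intertwines :
  opmul (monop actK a g) u = opmul u (monop actL b g).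

Lemma intertwiner_entry k l :
  a k g * u (actK g^-1%g k) l = u k (actL g l) * b (actL g l) g.
Proof.
by have := congr1 (fun A => A k l) u_intertwines; rewrite /= monop_mulE mul_monopE.
Qed.

Lemma intertwiner_rank_one k k' l :
  u k (actL g l) * (u k' (actL g l))^* =
  a k g * (u (actK g^-1%g k) l * (u (actK g^-1%g k') l)^*) * (a k' g)^*.
Proof.
have b_conjK : b (actL g l) g * (b (actL g l) g)^* = 1.
  by rewrite -normCK b_unimodular expr1n.
transitivity ((a k g * u (actK g^-1%g k) l) * (a k' g * u (actK g^-1%g k') l)^*).
  by rewrite !intertwiner_entry rmorphM /= mulrACA b_conjK mulr1.
by rewrite rmorphM /=; ring.
Qed.

Lemma intertwiner_sum_twist (F : L -> C) k k' :
  \sum_(l : L) u k l * F (actL g^-1%g l) * (u k' l)^* =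
  a k g * (\sum_(l : L) u (actK g^-1%g k) l * F l * (u (actK g^-1%g k') l)^*)
    * (a k' g)^*.
Proof.
rewrite (reindex_inj (can_inj (left_action_invK g actL_left))) /=.
rewrite mulr_sumr mulr_suml; apply: eq_bigr => l _.
rewrite left_action_invK // mulrAC intertwiner_rank_one.
ring.
Qed.

End Intertwiner.

Theorem proposition3p2 (C : numClosedFieldType) (n : nat) (K L : finType)
  (u : op C K L) (G : groupType) (actK : G -> K -> K) (actL : G -> L -> L)
  (a : K -> G -> C) (b : L -> G -> C) :
  #|K| = n -> #|L| = n ->
  unitary u -> (forall k l, u k l != 0) ->
  symmetry_group u actK actL a b ->
  forall (g : G) (f : K * L -> C),
    Cu u (Rrep actK actL g f) =
      opmul (opmul (monop actK a g) (Cu u f)) (opadj (monop actK a g)) /\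
    Du u (Rrep actK actL g f) =
      opmul (opmul (monop actK a g) (Du u f)) (opadj (monop actK a g)).
Proof.
move=> _ _ _ _ [_ actL_left [_ b_unimodular] _ u_intertwines] g f.
split; apply: functional_extensionality => k; apply: functional_extensionality => k';
  rewrite monop_conjE /Cu /Du /Rrep /=.
- exact: (intertwiner_sum_twist actL_left (b_unimodular^~ g) (u_intertwines g)
           (fun l => f (actK g^-1%g k, l))).
- exact: (intertwiner_sum_twist actL_left (b_unimodular^~ g) (u_intertwines g)
           (fun l => f (actK g^-1%g k', l))).
Qed.
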